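(* Let $\mathcal{H}=\mathbb{C}^2$ and let $\mathcal{GE}$ be the set of all entanglement breaking quantum channels on $\mathcal{L}(\mathcal{H})$. For every density operator $\tau$ on $\mathcal{H}\otimes\mathcal{H}$, $$C(\tau,\mathcal{GE})=\max_{\Psi\in\mathcal{GE}}\operatorname{tr}[\tau J_\Psi]\le\frac12\left(1+\sqrt{\|\boldsymbol{b}(\tau_2)\|^2+\|N(\tau)\|^2}\right),$$ where $\tau_2=\operatorname{tr}_1\tau$ and $\|N(\tau)\|$ is the operator norm of $N(\tau)$ induced by the Euclidean norm on $\mathbb{R}^3$.
   Context: A quantum channel is a linear, completely positive, trace preserving map on $\mathcal{L}(\mathcal{H})$; it is entanglement breaking if $(\mathrm{id}\otimes\Psi)(\rho)$ is separable for every density operator $\rho$ on $\mathcal{H}\otimes\mathcal{H}$. $J_\Psi=(\mathrm{id}\otimes\Psi)(P'_+)$ with $P'_+=\sum_{i,j=0}^1|i\rangle\langle j|\otimes|i\rangle\langle j|$ in the computational basis. $\operatorname{tr}_1$ is the partial trace over the first factor. Bloch vector: $b(X)_i=\operatorname{tr}[\sigma_iX]$, $i=1,2,3$, with Euclidean norm $\|\cdot\|$. Correlation matrix: $N(X)_{ij}=\operatorname{tr}[X(\sigma_i\otimes\sigma_j)]$, $i,j\in\{1,2,3\}$, $\sigma_i$ the Pauli matrices. *)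

From HB Require Import structures.
From mathcomp Require Import all_boot all_order all_algebra.
From mathcomp Require Import complex mxtens.
From mathcomp Require Import classical_sets reals.

Set Implicit Arguments.
Unset Strict Implicit.
Unset Printing Implicit Defensive.

Import Order.TTheory GRing.Theory Num.Theory.
Local Open Scope ring_scope.

Section QuantumDefs.
Variable R : realType.
Local Notation C := R[i].

Definition adj {m n} (A : 'M[C]_(m, n)) : 'M[C]_(n, m) := (map_mx Num.conj A)^T.

(* Positive semidefinite: Hermitian and <v, A v> >= 0 for all v
   (the order on C = R[i] means: real and nonnegative). *)
Definition psd {n} (A : 'M[C]_n) : Prop :=
  adj A = A /\ forall v : 'cV[C]_n, 0 <= (adj v *m A *m v) 0 0.

Definition density {n} (A : 'M[C]_n) : Prop := psd A /\ \tr A = 1.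

(* Block (i,j) of an operator X on C^n (x) C^2 (first factor = outer index),
   i.e. X = \sum_{i,j} |i><j| (x) blk i j X. *)
Definition blk {n} (i j : 'I_n) (X : 'M[C]_(n * 2)) : 'M[C]_2 :=
  \matrix_(k, l) X (mxtens_index (i, k)) (mxtens_index (j, l)).

Definition ampl n (Psi : 'M[C]_2 -> 'M[C]_2) (X : 'M[C]_(n * 2)) : 'M[C]_(n * 2) :=
  \sum_(i < n) \sum_(j < n) (delta_mx i j *t Psi (blk i j X)).

Definition linear_map (Psi : 'M[C]_2 -> 'M[C]_2) : Prop :=
  forall (a : C) (A B : 'M[C]_2), Psi (a *: A + B) = a *: Psi A + Psi B.

Definition completely_positive (Psi : 'M[C]_2 -> 'M[C]_2) : Prop :=
  forall (n : nat) (X : 'M[C]_(n * 2)), psd X -> psd (ampl Psi X).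

Definition trace_preserving (Psi : 'M[C]_2 -> 'M[C]_2) : Prop :=
  forall A : 'M[C]_2, \tr (Psi A) = \tr A.

Definition channel (Psi : 'M[C]_2 -> 'M[C]_2) : Prop :=
  [/\ linear_map Psi, completely_positive Psi & trace_preserving Psi].

Definition separable (rho : 'M[C]_(2 * 2)) : Prop :=
  exists (m : nat) (p : 'I_m -> R) (s w : 'I_m -> 'M[C]_2),
    [/\ forall k, 0 <= p k,
        forall k, density (s k),
        forall k, density (w k) &
        rho = \sum_(k < m) (p k)%:C%C *: (s k *t w k)].

Definition entanglement_breaking (Psi : 'M[C]_2 -> 'M[C]_2) : Prop :=
  channel Psi /\
  forall rho : 'M[C]_(2 * 2), density rho -> separable (ampl Psi rho).

Definition Pplus : 'M[C]_(2 * 2) :=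
  \sum_(i < 2) \sum_(j < 2) (delta_mx i j *t (delta_mx i j : 'M[C]_2)).

Definition choi (Psi : 'M[C]_2 -> 'M[C]_2) : 'M[C]_(2 * 2) := ampl Psi Pplus.

Definition ptrace1 (X : 'M[C]_(2 * 2)) : 'M[C]_2 := \sum_(i < 2) blk i i X.

(* Pauli matrices sigma_1, sigma_2, sigma_3 (indexed by 'I_3 = {0,1,2}). *)
Definition pauli (a : 'I_3) : 'M[C]_2 :=
  \matrix_(k < 2, l < 2)
    (if val a == 0%N then (if k != l then 1 else 0)
     else if val a == 1%N then
       (if (val k == 0%N) && (val l == 1%N) then - Complex 0 1
        else if (val k == 1%N) && (val l == 0%N) then Complex 0 1 else 0)
     else (if k == l then (if val k == 0%N then 1 else -1) else 0)).

(* Bloch vector and correlation matrix.  The traces are real for the Hermitian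
   operators they are applied to; we record their real parts. *)
Definition bloch (X : 'M[C]_2) : 'cV[R]_3 :=
  \col_a complex.Re (\tr (pauli a *m X)).

Definition corr (X : 'M[C]_(2 * 2)) : 'M[R]_3 :=
  \matrix_(a, b) complex.Re (\tr (X *m (pauli a *t pauli b))).

Definition enorm (v : 'cV[R]_3) : R := Num.sqrt (\sum_(a < 3) v a 0 ^+ 2).

Definition opnorm (M : 'M[R]_3) : R :=
  sup [set enorm (M *m x) | x in [set x : 'cV[R]_3 | enorm x <= 1]].

End QuantumDefs.

From HB Require Import structures.
From mathcomp Require Import all_boot all_order all_algebra.
From mathcomp Require Import complex mxtens.
From mathcomp Require Import classical_sets reals.
From mathcomp Require Import ring lra.

(* Let Psi be entanglement breaking.  Its Choi matrix is twice the separable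
   state (id (x) Psi)(P'_+/2) = sum_k p_k s_k (x) w_k.  As Psi preserves traces,
   the first marginal sum_k p_k s_k is I/2, so the p_k sum to 1 and the Bloch
   vectors a_k of the s_k average to 0.  Writing s_k = (I + a_k.sigma)/2,
   w_k = (I + b_k.sigma)/2, t = b(tau_2) and N = N(tau), this gives
   tr[tau J_Psi] = (1 + sum_k p_k b_k.(t + N^T a_k))/2.  For l > 0,
   2 l b.(t + N^T a) <= l^2 + |t|^2 + |N|^2 + 2 a.(N t) because |a|, |b| <= 1;
   averaging removes the last term, and l = sqrt(|t|^2 + |N|^2) gives the bound. *)

Set Implicit Arguments.
Unset Strict Implicit.
Unset Printing Implicit Defensive.

Import Order.TTheory GRing.Theory Num.Theory.
Local Open Scope ring_scope.

Section TensorProduct.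
Variable K : comPzRingType.

Lemma tensmxDl m n p q (A A' : 'M[K]_(m, n)) (B : 'M[K]_(p, q)) :
  (A + A') *t B = A *t B + A' *t B.
Proof. by apply/matrixP=> k l; rewrite !mxE mulrDl. Qed.

Lemma tensmxDr m n p q (A : 'M[K]_(m, n)) (B B' : 'M[K]_(p, q)) :
  A *t (B + B') = A *t B + A *t B'.
Proof. by apply/matrixP=> k l; rewrite !mxE mulrDr. Qed.

Lemma tensmxZl m n p q c (A : 'M[K]_(m, n)) (B : 'M[K]_(p, q)) :
  (c *: A) *t B = c *: (A *t B).
Proof. by apply/matrixP=> k l; rewrite !mxE mulrA. Qed.

Lemma tensmxZr m n p q c (A : 'M[K]_(m, n)) (B : 'M[K]_(p, q)) :
  A *t (c *: B) = c *: (A *t B).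
Proof. by apply/matrixP=> k l; rewrite !mxE mulrCA. Qed.

Lemma tensmx_suml m n p q I (r : seq I) (P : pred I) (F : I -> 'M[K]_(m, n))
    (B : 'M[K]_(p, q)) :
  (\sum_(k <- r | P k) F k) *t B = \sum_(k <- r | P k) F k *t B.
Proof.
apply/matrixP=> k l; rewrite !mxE !summxE mulr_suml.
by apply: eq_bigr => x _; rewrite !mxE.
Qed.

Lemma tensmx_sumr m n p q I (r : seq I) (P : pred I) (A : 'M[K]_(m, n))
    (F : I -> 'M[K]_(p, q)) :
  A *t (\sum_(k <- r | P k) F k) = \sum_(k <- r | P k) A *t F k.
Proof.
apply/matrixP=> k l; rewrite !mxE !summxE mulr_sumr.
by apply: eq_bigr => x _; rewrite !mxE.
Qed.

Lemma tensmx11 m n : (1%:M : 'M[K]_m) *t (1%:M : 'M[K]_n) = 1%:M.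
Proof.
apply/matrixP=> k l.
case: (mxtens_indexP k) => i a; case: (mxtens_indexP l) => j b.
rewrite tensmxE !mxE (inj_eq (can_inj (@mxtens_indexK m n))) xpair_eqE.
by rewrite -natrM mulnb.
Qed.

Lemma mxtrace_delta n (i j : 'I_n) : \tr (delta_mx i j : 'M[K]_n) = (i == j)%:R.
Proof.
rewrite /mxtrace (bigD1 i) //= big1 ?addr0; first by rewrite mxE eqxx /= eq_sym.
by move=> k /negbTE hk; rewrite mxE hk.
Qed.

End TensorProduct.

Lemma sum_mxtens_index (V : nmodType) m n (F : 'I_(m * n) -> V) :
  \sum_k F k = \sum_(i < m) \sum_(j < n) F (mxtens_index (i, j)).
Proof.
rewrite pair_big /= (reindex (@mxtens_index m n)) /=; last first.
  by exists (@mxtens_unindex m n) => x _;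
    [apply: mxtens_indexK | apply: mxtens_unindexK].
by apply: eq_bigr => -[i j].
Qed.

Lemma sum_delta_mx_scale (K : pzRingType) (V : lmodType K) n (i j : 'I_n)
    (G : 'I_n -> 'I_n -> V) :
  \sum_(i' < n) \sum_(j' < n) delta_mx i' j' i j *: G i' j' = G i j.
Proof.
rewrite (bigD1 i) //= [X in _ + X]big1 ?addr0; last first.
  move=> i' /negbTE hi'; rewrite big1 // => j' _.
  by rewrite mxE eq_sym hi' /= scale0r.
rewrite (bigD1 j) //= [X in _ + X]big1 ?addr0; last first.
  by move=> j' /negbTE hj'; rewrite mxE eq_sym hj' andbF scale0r.
by rewrite mxE !eqxx scale1r.
Qed.

Section ComplexParts.
Variable R : rcfType.

Lemma conjC_conjc (x : R[i]) : Num.conj x = (x^*)%C.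
Proof.
have [->|nz] := eqVneq x 0; first by rewrite rmorph0 conjc0.
by apply: (mulfI nz); rewrite -normCK sqr_normc.
Qed.

Lemma ReD (x y : R[i]) : complex.Re (x + y) = complex.Re x + complex.Re y.
Proof. by case: x; case: y. Qed.

Lemma Re_sum I (r : seq I) (P : pred I) (F : I -> R[i]) :
  complex.Re (\sum_(k <- r | P k) F k) = \sum_(k <- r | P k) complex.Re (F k).
Proof. exact: (big_morph _ ReD). Qed.

Lemma ReM_real (a : R) (z : R[i]) : complex.Re (a%:C%C * z) = a * complex.Re z.
Proof. by case: z => x y /=; rewrite mul0r subr0. Qed.

End ComplexParts.

Section RealInequalities.
Variable R : rcfType.

Lemma sum_weighted_dot0 m n (p : 'I_m -> R) (a : 'I_m -> 'I_n -> R) (c : 'I_n -> R) :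
  (forall i, \sum_k p k * a k i = 0) -> \sum_k p k * \sum_i a k i * c i = 0.
Proof.
move=> h; under eq_bigr => k _ do rewrite mulr_sumr.
rewrite exchange_big big1 // => i _; under eq_bigr => k _ do rewrite mulrA.
by rewrite -mulr_suml h mul0r.
Qed.

Lemma cauchy_schwarz3 (x z : 'I_3 -> R) :
  (\sum_i x i * z i) ^+ 2 <= (\sum_i x i ^+ 2) * \sum_i z i ^+ 2.
Proof.
rewrite !big_ord_recl !big_ord0 !addr0.
set x0 := x _; set x1 := x _; set x2 := x _.
set z0 := z _; set z1 := z _; set z2 := z _.
have := sqr_ge0 (x0 * z1 - x1 * z0); have := sqr_ge0 (x0 * z2 - x2 * z0).
have := sqr_ge0 (x1 * z2 - x2 * z1); nra.
Qed.

Lemma ler_sqrt_of_quadratic (X Q : R) :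
  0 <= Q -> (forall l, 0 < l -> 2 * l * X <= l ^+ 2 + Q) -> X <= Num.sqrt Q.
Proof.
move=> hQ h; have [sQ_gt0|] := ltrP 0 (Num.sqrt Q).
  have := h _ sQ_gt0; have := sqr_sqrtr hQ.
  move: (Num.sqrt Q) sQ_gt0 => s s_gt0 <-; nra.
rewrite le_eqVlt ltNge sqrtr_ge0 orbF sqrtr_eq0 => Q_le0.
have Q0 : Q = 0 by apply/le_anti; rewrite Q_le0 hQ.
rewrite Q0 sqrtr0 leNgt; apply/negP => X_gt0.
have := h _ X_gt0; rewrite Q0; nra.
Qed.

(* Completing the square: 2 l b.(t + N^T a) <= l^2 |b|^2 + |t + N^T a|^2. *)
Lemma quadratic_bloch_bound (a b t : 'I_3 -> R) (N : 'I_3 -> 'I_3 -> R) (K l : R) :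
  \sum_i a i ^+ 2 <= 1 -> \sum_j b j ^+ 2 <= 1 ->
  \sum_j (\sum_i a i * N i j) ^+ 2 <= K ^+ 2 * \sum_i a i ^+ 2 ->
  2 * l * (\sum_j b j * t j + \sum_i a i * \sum_j b j * N i j)
  <= l ^+ 2 + (\sum_j t j ^+ 2 + K ^+ 2) + 2 * \sum_i a i * \sum_j t j * N i j.
Proof.
rewrite !big_ord_recl !big_ord0 !addr0.
set a0 := a _; set a1 := a _; set a2 := a _.
set b0 := b _; set b1 := b _; set b2 := b _.
set t0 := t _; set t1 := t _; set t2 := t _.
set y0 := (a0 * N _ _ + _); set y1 := (a0 * N _ _ + _); set y2 := (a0 * N _ _ + _).
move=> ha hb hy.
have e1 := sqr_ge0 (l * b0 - (t0 + y0)).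
have e2 := sqr_ge0 (l * b1 - (t1 + y1)).
have e3 := sqr_ge0 (l * b2 - (t2 + y2)).
have e4 : l ^+ 2 * (b0 ^+ 2 + (b1 ^+ 2 + b2 ^+ 2)) <= l ^+ 2.
  by rewrite -[leRHS]mulr1 ler_wpM2l ?sqr_ge0.
have e5 : K ^+ 2 * (a0 ^+ 2 + (a1 ^+ 2 + a2 ^+ 2)) <= K ^+ 2.
  by rewrite -[leRHS]mulr1 ler_wpM2l ?sqr_ge0.
rewrite /y0 /y1 /y2 in e1 e2 e3 hy; nra.
Qed.

Lemma mean_bloch_bound m (p : 'I_m -> R) (a b : 'I_m -> 'I_3 -> R) (t : 'I_3 -> R)
    (N : 'I_3 -> 'I_3 -> R) (K : R) :
  (forall k, 0 <= p k) -> \sum_k p k = 1 ->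
  (forall k, \sum_i a k i ^+ 2 <= 1) -> (forall k, \sum_j b k j ^+ 2 <= 1) ->
  (forall i, \sum_k p k * a k i = 0) ->
  (forall x : 'I_3 -> R,
     \sum_j (\sum_i x i * N i j) ^+ 2 <= K ^+ 2 * \sum_i x i ^+ 2) ->
  \sum_k p k * (\sum_j b k j * t j + \sum_i a k i * \sum_j b k j * N i j)
  <= Num.sqrt (\sum_j t j ^+ 2 + K ^+ 2).
Proof.
move=> p0 p1 ha hb hpa hN.
apply: ler_sqrt_of_quadratic => [|l l0].
  by rewrite addr_ge0 ?sqr_ge0 // sumr_ge0 // => j _; rewrite sqr_ge0.
set Q := _ + _.
have bound k := ler_wpM2l (p0 k)
  (@quadratic_bloch_bound (a k) (b k) t N K l (ha k) (hb k) (hN (a k))).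
rewrite mulr_sumr (eq_bigr _ (fun k _ => mulrCA _ _ _)).
apply: le_trans (ler_sum _ (fun k _ => bound k)) _.
under eq_bigr => k _ do rewrite mulrDr mulrCA.
by rewrite big_split /= -mulr_suml p1 mul1r -mulr_sumr sum_weighted_dot0 // mulr0 addr0.
Qed.

End RealInequalities.

Section Operators.
Variable R : realType.
Local Notation C := R[i].

Lemma adj_mul m n p (A : 'M[C]_(m, n)) (B : 'M[C]_(n, p)) :
  adj (A *m B) = adj B *m adj A.
Proof. by rewrite /adj map_mxM trmx_mul. Qed.

Lemma adjK m n (A : 'M[C]_(m, n)) : adj (adj A) = A.
Proof. by apply/matrixP=> i j; rewrite /adj !mxE conjCK. Qed.

Lemma adjZ m n (c : C) (A : 'M[C]_(m, n)) : adj (c *: A) = Num.conj c *: adj A.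
Proof. by apply/matrixP=> i j; rewrite /adj !mxE rmorphM. Qed.

Lemma mxtrace_adj n (A : 'M[C]_n) : \tr (adj A) = Num.conj (\tr A).
Proof.
rewrite /adj mxtrace_tr /mxtrace rmorph_sum.
by apply: eq_bigr => i _; rewrite mxE.
Qed.

Lemma mxtrace_herm_real n (X Y : 'M[C]_n) : adj X = X -> adj Y = Y ->
  \tr (X *m Y) = (complex.Re (\tr (X *m Y)))%:C%C.
Proof.
move=> hX hY; rewrite RRe_real // CrealE; apply/eqP.
by rewrite -mxtrace_adj adj_mul hX hY mxtrace_mulC.
Qed.

Lemma psd_gram n m (A : 'M[C]_(n, m)) : psd (A *m adj A).
Proof.
split; first by rewrite adj_mul adjK.
move=> v; have -> : adj v *m (A *m adj A) *m v = (adj v *m A) *m adj (adj v *m A).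
  by rewrite adj_mul adjK !mulmxA.
rewrite mxE; apply: sumr_ge0 => k _.
by rewrite /adj !mxE mul_conjC_ge0.
Qed.

Lemma psdZ n (c : C) (X : 'M[C]_n) : 0 <= c -> psd X -> psd (c *: X).
Proof.
move=> c0 [hX hXv]; split; first by rewrite adjZ hX geC0_conj.
by move=> v; rewrite -scalemxAr -scalemxAl mxE mulr_ge0.
Qed.

Lemma blkE n (X : 'M[C]_(n * 2)) i j a b :
  X (mxtens_index (i, a)) (mxtens_index (j, b)) = blk i j X a b.
Proof. by rewrite mxE. Qed.

Lemma blk_sum n (i j : 'I_n) I (r : seq I) (P : pred I) (F : I -> 'M[C]_(n * 2)) :
  blk i j (\sum_(k <- r | P k) F k) = \sum_(k <- r | P k) blk i j (F k).
Proof.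
apply/matrixP=> k l; rewrite !mxE !summxE.
by apply: eq_bigr => x _; rewrite mxE.
Qed.

Lemma blkZ n (i j : 'I_n) c (X : 'M[C]_(n * 2)) : blk i j (c *: X) = c *: blk i j X.
Proof. by apply/matrixP=> k l; rewrite !mxE. Qed.

Lemma blk_tens n (i j : 'I_n) (A : 'M[C]_n) (B : 'M[C]_2) :
  blk i j (A *t B) = A i j *: B.
Proof. by apply/matrixP=> k l; rewrite mxE tensmxE mxE. Qed.

Lemma blk_sum_delta_tens n (i j : 'I_n) (G : 'I_n -> 'I_n -> 'M[C]_2) :
  blk i j (\sum_(i' < n) \sum_(j' < n) (delta_mx i' j' *t G i' j')) = G i j.
Proof.
rewrite blk_sum; under eq_bigr => i' _ do rewrite blk_sum.
under eq_bigr => i' _ do under eq_bigr => j' _ do rewrite blk_tens.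
exact: sum_delta_mx_scale.
Qed.

Lemma mxtrace_blk n (X : 'M[C]_(n * 2)) : \tr X = \sum_(i < n) \tr (blk i i X).
Proof.
rewrite /mxtrace sum_mxtens_index; apply: eq_bigr => i _.
by apply: eq_bigr => a _; rewrite mxE.
Qed.

Lemma blk_ampl n Psi (X : 'M[C]_(n * 2)) (i j : 'I_n) :
  blk i j (ampl Psi X) = Psi (blk i j X).
Proof. exact: blk_sum_delta_tens. Qed.

Lemma linear_map0 (Psi : 'M[C]_2 -> 'M[C]_2) : linear_map Psi -> Psi 0 = 0.
Proof.
move=> h; have := h 1 0 0; rewrite scaler0 addr0 scale1r => E.
by apply/esym/(addrI (Psi 0)); rewrite addr0 {1}E.
Qed.

Lemma linear_mapZ (Psi : 'M[C]_2 -> 'M[C]_2) c A :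
  linear_map Psi -> Psi (c *: A) = c *: Psi A.
Proof. by move=> h; have := h c A 0; rewrite !addr0 linear_map0 // addr0. Qed.

Lemma amplZ n Psi c (X : 'M[C]_(n * 2)) : linear_map Psi ->
  ampl Psi (c *: X) = c *: ampl Psi X.
Proof.
move=> h; rewrite /ampl scaler_sumr; apply: eq_bigr => i _.
rewrite scaler_sumr; apply: eq_bigr => j _.
by rewrite blkZ linear_mapZ // tensmxZr.
Qed.

Definition ptrace2 {n} (X : 'M[C]_(n * 2)) : 'M[C]_n := \matrix_(i, j) \tr (blk i j X).

Lemma ptrace2_sum n I (r : seq I) (P : pred I) (F : I -> 'M[C]_(n * 2)) :
  ptrace2 (\sum_(k <- r | P k) F k) = \sum_(k <- r | P k) ptrace2 (F k).
Proof.
apply/matrixP=> i j; rewrite !mxE summxE blk_sum raddf_sum.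
by apply: eq_bigr => k _; rewrite mxE.
Qed.

Lemma ptrace2Z n c (X : 'M[C]_(n * 2)) : ptrace2 (c *: X) = c *: ptrace2 X.
Proof. by apply/matrixP=> i j; rewrite !mxE blkZ mxtraceZ. Qed.

Lemma ptrace2_tens n (A : 'M[C]_n) (B : 'M[C]_2) : ptrace2 (A *t B) = \tr B *: A.
Proof. by apply/matrixP=> i j; rewrite !mxE blk_tens mxtraceZ mulrC. Qed.

Lemma ptrace2_ampl n Psi (X : 'M[C]_(n * 2)) :
  trace_preserving Psi -> ptrace2 (ampl Psi X) = ptrace2 X.
Proof. by move=> tp; apply/matrixP=> i j; rewrite !mxE blk_ampl tp. Qed.

Lemma mxtrace_ptrace1 (X : 'M[C]_(2 * 2)) (B : 'M[C]_2) :
  \tr (X *m (1%:M *t B)) = \tr (ptrace1 X *m B).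
Proof.
rewrite /mxtrace sum_mxtens_index.
under eq_bigr => i _ do under eq_bigr => a _ do rewrite mxE sum_mxtens_index.
rewrite exchange_big /=; apply: eq_bigr => a _.
rewrite mxE; under [RHS]eq_bigr => b _ do rewrite /ptrace1 summxE mulr_suml.
rewrite [RHS]exchange_big /=; apply: eq_bigr => i _.
rewrite (bigD1 i) //= [X in _ + X]big1 ?addr0; last first.
  move=> j /negbTE hj; apply: big1 => b _.
  by rewrite tensmxE mxE hj mul0r mulr0.
by apply: eq_bigr => b _; rewrite tensmxE !mxE eqxx mul1r.
Qed.

Lemma blk_Pplus (i j : 'I_2) : blk i j (Pplus R) = delta_mx i j.
Proof. exact: blk_sum_delta_tens. Qed.

Lemma ptrace2_Pplus : ptrace2 (Pplus R) = 1%:M.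
Proof. by apply/matrixP=> i j; rewrite !mxE blk_Pplus mxtrace_delta. Qed.

Lemma mxtrace_Pplus : \tr (Pplus R) = 2.
Proof.
rewrite mxtrace_blk; under eq_bigr => i _ do rewrite blk_Pplus mxtrace_delta eqxx.
by rewrite sumr_const card_ord.
Qed.

(* The column vector is Phi = |00> + |11>, so that P'_+ = |Phi><Phi|. *)
Lemma Pplus_gram :
  Pplus R = (\col_k ((mxtens_unindex k).1 == (mxtens_unindex k).2)%:R)
            *m adj (\col_k ((mxtens_unindex k).1 == (mxtens_unindex k).2)%:R).
Proof.
apply/matrixP=> k l.
case: (mxtens_indexP k) => i a; case: (mxtens_indexP l) => j b.
rewrite blkE blk_Pplus !mxE big_ord1 /adj !mxE !mxtens_indexK /=.
rewrite conjC_nat -natrM mulnb; congr (_%:R).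
by rewrite eq_sym [b == j]eq_sym.
Qed.

Lemma psd_Pplus : psd (Pplus R).
Proof. rewrite Pplus_gram; exact: psd_gram. Qed.

Lemma density_Pplus_half : density (2^-1 *: Pplus R).
Proof.
split; last by rewrite mxtraceZ mxtrace_Pplus mulVf // pnatr_eq0.
by apply: psdZ psd_Pplus; rewrite invr_ge0 ler0n.
Qed.

Lemma Re_mxtrace_comb n (X : 'M[C]_n) I (r : seq I) (P : pred I) (c : I -> R)
    (M : I -> 'M[C]_n) :
  complex.Re (\tr (X *m \sum_(k <- r | P k) (c k)%:C%C *: M k))
  = \sum_(k <- r | P k) c k * complex.Re (\tr (X *m M k)).
Proof.
rewrite mulmx_sumr (big_morph _ (@mxtraceD C n) (mxtrace0 C n)) Re_sum.
by apply: eq_bigr => k _; rewrite -scalemxAr mxtraceZ ReM_real.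
Qed.

Lemma Re_mxtrace_tens_combr m n (X : 'M[C]_(m * n)) (A : 'M[C]_m) I (r : seq I)
    (P : pred I) (c : I -> R) (M : I -> 'M[C]_n) :
  complex.Re (\tr (X *m (A *t \sum_(k <- r | P k) (c k)%:C%C *: M k)))
  = \sum_(k <- r | P k) c k * complex.Re (\tr (X *m (A *t M k))).
Proof.
rewrite tensmx_sumr -Re_mxtrace_comb; congr (complex.Re (\tr (X *m _))).
by apply: eq_bigr => k _; rewrite tensmxZr.
Qed.

Lemma Re_mxtrace_tens_combl m n (X : 'M[C]_(m * n)) (B : 'M[C]_n) I (r : seq I)
    (P : pred I) (c : I -> R) (M : I -> 'M[C]_m) :
  complex.Re (\tr (X *m ((\sum_(k <- r | P k) (c k)%:C%C *: M k) *t B)))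
  = \sum_(k <- r | P k) c k * complex.Re (\tr (X *m (M k *t B))).
Proof.
rewrite tensmx_suml -Re_mxtrace_comb; congr (complex.Re (\tr (X *m _))).
by apply: eq_bigr => k _; rewrite tensmxZl.
Qed.

Lemma Re_mxtrace_tens_add1 m n (X : 'M[C]_(m * n)) (A : 'M[C]_m) (B : 'M[C]_n) :
  complex.Re (\tr (X *m ((1%:M + A) *t (1%:M + B))))
  = complex.Re (\tr X) + complex.Re (\tr (X *m (1%:M *t B)))
    + complex.Re (\tr (X *m (A *t 1%:M))) + complex.Re (\tr (X *m (A *t B))).
Proof. by rewrite tensmxDl !tensmxDr tensmx11 !mulmxDr !mxtraceD !ReD mulmx1 !addrA. Qed.

End Operators.

Section Qubit.
Variable R : realType.
Local Notation C := R[i].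
Local Notation o0 := (@ord0 1).
Local Notation o1 := (lift (@ord0 1) (@ord0 0)).
Local Notation q0 := (@ord0 2).
Local Notation q1 := (lift (@ord0 2) (@ord0 1)).
Local Notation q2 := (lift (@ord0 2) (lift (@ord0 1) (@ord0 0))).

Lemma ord2P (a : 'I_2) : a = o0 \/ a = o1.
Proof. by case: a => [[|[|]]] // ?; [left|right]; apply: val_inj. Qed.

Lemma ord3P (a : 'I_3) : [\/ a = q0, a = q1 | a = q2].
Proof.
by case: a => [[|[|[|]]]] // ?; [apply: Or31|apply: Or32|apply: Or33]; apply: val_inj.
Qed.

Lemma mxtrace_pauli0M (A : 'M[C]_2) : \tr (pauli R q0 *m A) = A o1 o0 + A o0 o1.
Proof. rewrite /mxtrace !big_ord_recl big_ord0 !mxE !big_ord_recl !big_ord0 !mxE /=; ring. Qed.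

Lemma mxtrace_pauli1M (A : 'M[C]_2) :
  \tr (pauli R q1 *m A) = - 'i%C * A o1 o0 + 'i%C * A o0 o1.
Proof. rewrite /mxtrace !big_ord_recl big_ord0 !mxE !big_ord_recl !big_ord0 !mxE /=; ring. Qed.

Lemma mxtrace_pauli2M (A : 'M[C]_2) : \tr (pauli R q2 *m A) = A o0 o0 - A o1 o1.
Proof. rewrite /mxtrace !big_ord_recl big_ord0 !mxE !big_ord_recl !big_ord0 !mxE /=; ring. Qed.

Lemma mxtrace_pauli a : \tr (pauli R a) = 0.
Proof.
by case: (ord3P a) => ->; rewrite /mxtrace !big_ord_recl big_ord0 !mxE /= ?addr0 ?subrr.
Qed.

Lemma adj_pauli a : adj (pauli R a) = pauli R a.
Proof.
apply/matrixP=> k l; rewrite /adj !mxE.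
case: (ord3P a) => ->; case: (ord2P k) => ->; case: (ord2P l) => -> /=;
  rewrite ?conjC0 ?conjC1 // conjC_conjc;
  by apply/eqP; rewrite eq_complex /= ?oppr0 ?opprK !eqxx.
Qed.

Lemma herm_pauli_expansion (s : 'M[C]_2) : adj s = s -> \tr s = 1 ->
  s = 2^-1 *: (1%:M + \sum_a (bloch s a 0)%:C%C *: pauli R a).
Proof.
move=> hs tr1.
have e11 : s o1 o1 = 1 - s o0 o0.
  by rewrite -tr1 /mxtrace !big_ord_recl big_ord0 addr0 addrAC subrr add0r.
have ii : 'i%C * 'i%C = -1 :> C by rewrite -expr2 sqr_i.
apply/matrixP=> k l; rewrite !mxE summxE !big_ord_recl big_ord0 !mxE.
rewrite -!(mxtrace_herm_real (adj_pauli _) hs).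
rewrite mxtrace_pauli0M mxtrace_pauli1M mxtrace_pauli2M.
by case: (ord2P k) => ->; case: (ord2P l) => -> /=; field: e11 ii.
Qed.

Lemma quad_form2 (s : 'M[C]_2) (v : 'cV[C]_2) : (adj v *m s *m v) 0 0 =
  Num.conj (v o0 0) * s o0 o0 * v o0 0 + Num.conj (v o0 0) * s o0 o1 * v o1 0 +
  Num.conj (v o1 0) * s o1 o0 * v o0 0 + Num.conj (v o1 0) * s o1 o1 * v o1 0.
Proof. rewrite !mxE !big_ord_recl !big_ord0 !mxE !big_ord_recl !big_ord0 /adj !mxE; ring. Qed.

Lemma density2_param (s : 'M[C]_2) : density s -> exists x u v : R,
  [/\ s o0 o0 = x%:C%C, s o1 o1 = (1 - x)%:C%C, s o0 o1 = (u +i* v)%C,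
      s o1 o0 = (u -i* v)%C & u ^+ 2 + v ^+ 2 <= x * (1 - x)].
Proof.
move=> [[hh hpsd] htr].
have herm i j : Num.conj (s j i) = s i j.
  by have := congr1 (fun M : 'M[C]_2 => M i j) hh; rewrite /adj !mxE.
have tr2 : s o0 o0 + s o1 o1 = 1.
  by rewrite -htr /mxtrace !big_ord_recl big_ord0 addr0.
(* On these two vectors the quadratic form of s is s00 det s and s11 det s. *)
have q1 := hpsd (\col_i (if i == o0 then s o0 o1 else - s o0 o0)).
have q2 := hpsd (\col_i (if i == o0 then - s o1 o1 else s o1 o0)).
rewrite quad_form2 !mxE /= in q1; rewrite quad_form2 !mxE /= in q2.
have h00 := herm o0 o0; have h11 := herm o1 o1; have h01 := herm o0 o1.
move: (s o0 o0) (s o1 o1) (s o0 o1) (s o1 o0) h00 h11 h01 tr2 q1 q2.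
move=> [x0 y0] [x1 y1] [x2 y2] [x3 y3].
rewrite !conjC_conjc; simpc => h00 h11 h01 tr2 q1 q2.
case: h00 => hy0; case: h11 => hy1; case: h01 => hx3 hy3; case: tr2 => hx hy.
move/andP: q1 => [_ q1]; move/andP: q2 => [_ q2].
have -> : y0 = 0 by lra.
have -> : y1 = 0 by lra.
have -> : x1 = 1 - x0 by lra.
have y3e : y3 = - y2 by lra.
rewrite y3e hx3 in q1 q2 *.
by exists x0, x2, y2; split => //; nra.
Qed.

Lemma bloch_density2_le1 (s : 'M[C]_2) : density s -> \sum_a bloch s a 0 ^+ 2 <= 1.
Proof.
move=> hs; have [x [u [v [e00 e11 e01 e10 h]]]] := density2_param hs.
rewrite !big_ord_recl big_ord0 !mxE.
rewrite mxtrace_pauli0M mxtrace_pauli1M mxtrace_pauli2M e00 e11 e01 e10 /=.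
nra.
Qed.

Lemma Re_mxtrace_tens_pauli (tau : 'M[C]_(2 * 2)) (a b : 'I_3 -> R) : \tr tau = 1 ->
  complex.Re (\tr (tau *m ((1%:M + \sum_i (a i)%:C%C *: pauli R i)
                             *t (1%:M + \sum_j (b j)%:C%C *: pauli R j))))
  = 1 + \sum_j b j * bloch (ptrace1 tau) j 0
      + \sum_i a i * complex.Re (\tr (tau *m (pauli R i *t 1%:M)))
      + \sum_i a i * \sum_j b j * corr tau i j.
Proof.
move=> htau; rewrite Re_mxtrace_tens_add1 htau Re_mxtrace_tens_combr.
rewrite !Re_mxtrace_tens_combl; congr (_ + _ + _ + _); apply: eq_bigr => i _.
  by rewrite [bloch _ _ _]mxE mxtrace_ptrace1 mxtrace_mulC.
rewrite Re_mxtrace_tens_combr; congr (_ * _).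
by apply: eq_bigr => j _; rewrite [corr _ _ _]mxE.
Qed.

Lemma Re_mxtrace_tens_density (tau : 'M[C]_(2 * 2)) (s w : 'M[C]_2) :
  \tr tau = 1 -> density s -> density w ->
  complex.Re (\tr (tau *m (s *t w))) = (1
    + \sum_j bloch w j 0 * bloch (ptrace1 tau) j 0
    + \sum_i bloch s i 0 * complex.Re (\tr (tau *m (pauli R i *t 1%:M)))
    + \sum_i bloch s i 0 * \sum_j bloch w j 0 * corr tau i j) / 4.
Proof.
move=> htau [[hs _] trs] [[hw _] trw].
have quarter : (2^-1 * 2^-1 : C) = (4^-1 : R)%:C%C.
  by rewrite -invfM -natrM rmorphV ?unitfE ?pnatr_eq0 // rmorph_nat.
rewrite {1}(herm_pauli_expansion hs trs) {1}(herm_pauli_expansion hw trw).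
rewrite tensmxZl tensmxZr scalerA quarter -scalemxAr mxtraceZ ReM_real.
by rewrite Re_mxtrace_tens_pauli // mulrC.
Qed.

End Qubit.

Section OperatorNorm.
Variable R : realType.

Definition sqnorm (v : 'cV[R]_3) : R := \sum_a v a 0 ^+ 2.

Lemma sqnorm_ge0 (v : 'cV[R]_3) : 0 <= sqnorm v.
Proof. by apply: sumr_ge0 => a _; rewrite sqr_ge0. Qed.

Lemma enorm_ge0 (v : 'cV[R]_3) : 0 <= enorm v.
Proof. exact: sqrtr_ge0. Qed.

Lemma enorm_sqr (v : 'cV[R]_3) : enorm v ^+ 2 = sqnorm v.
Proof. exact/sqr_sqrtr/sqnorm_ge0. Qed.

Lemma enormZ c (v : 'cV[R]_3) : enorm (c *: v) = `|c| * enorm v.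
Proof.
rewrite /enorm -sqrtr_sqr -sqrtrM ?sqr_ge0 // mulr_sumr.
by congr Num.sqrt; apply: eq_bigr => a _; rewrite mxE exprMn.
Qed.

Lemma enorm_eq0 (v : 'cV[R]_3) : (enorm v == 0) = (v == 0).
Proof.
apply/idP/eqP => [|->]; last first.
  by rewrite /enorm big1 ?sqrtr0 // => a _; rewrite mxE expr0n.
rewrite sqrtr_eq0 => h; apply/matrixP => a j; rewrite ord1 mxE.
have /psumr_eq0P v0 : sqnorm v = 0 by apply/le_anti; rewrite h sqnorm_ge0.
by apply/eqP; rewrite -sqrf_eq0 v0 // => a' _; rewrite sqr_ge0.
Qed.

Lemma enorm0 : enorm (0 : 'cV[R]_3) = 0.
Proof. by apply/eqP; rewrite enorm_eq0. Qed.

Lemma opnorm_ub (N : 'M[R]_3) (x : 'cV[R]_3) : enorm x <= 1 -> enorm (N *m x) <= opnorm N.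
Proof.
move=> hx; apply: ub_le_sup; last by exists x.
exists (Num.sqrt (\sum_i \sum_j N i j ^+ 2)).
move=> _ [y hy <-]; rewrite ler_wsqrtr //; apply: ler_sum => i _.
rewrite mxE; apply: le_trans (cauchy_schwarz3 (N i) (y ^~ 0)) _.
rewrite -[leRHS]mulr1 ler_wpM2l //; first by apply: sumr_ge0 => j _; rewrite sqr_ge0.
by move: hy; rewrite /= /enorm -[X in _ <= X -> _]sqrtr1 ler_sqrt.
Qed.

Lemma opnorm_ge0 (N : 'M[R]_3) : 0 <= opnorm N.
Proof.
by apply: le_trans (enorm_ge0 (N *m 0)) (opnorm_ub _ _); rewrite enorm0.
Qed.

Lemma enorm_mulmx_le (N : 'M[R]_3) (y : 'cV[R]_3) : enorm (N *m y) <= opnorm N * enorm y.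
Proof.
have [->|y_neq0] := eqVneq y 0; first by rewrite mulmx0 enorm0 mulr0.
have ny_gt0 : 0 < enorm y by rewrite lt_def enorm_eq0 y_neq0 sqrtr_ge0.
have ny_inv_ge0 : 0 <= (enorm y)^-1 by rewrite invr_ge0 ltW.
have := @opnorm_ub N ((enorm y)^-1 *: y).
rewrite enormZ -scalemxAr enormZ ger0_norm // mulVf ?gt_eqF // lexx mulrC.
by rewrite ler_pdivrMr // => /(_ isT).
Qed.

Lemma opnorm_trmx_sqr (N : 'M[R]_3) (x : 'I_3 -> R) :
  \sum_j (\sum_i x i * N i j) ^+ 2 <= opnorm N ^+ 2 * \sum_i x i ^+ 2.
Proof.
pose y : 'cV[R]_3 := \col_j \sum_i x i * N i j.
have -> : \sum_j (\sum_i x i * N i j) ^+ 2 = sqnorm y.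
  by apply: eq_bigr => j _; rewrite mxE.
(* |N^T x|^2 = x.(N N^T x) <= |x| |N (N^T x)| <= |x| |N| |N^T x| *)
have yNy : sqnorm y = \sum_i x i * (N *m y) i 0.
  rewrite /sqnorm; under eq_bigr => j _ do rewrite expr2 {1}mxE mulr_suml.
  rewrite exchange_big; apply: eq_bigr => i _; rewrite mxE mulr_sumr.
  by apply: eq_bigr => j _; rewrite mxE mulrA.
have Ny_le : sqnorm (N *m y) <= opnorm N ^+ 2 * sqnorm y.
  rewrite -!enorm_sqr -exprMn lerXn2r ?nnegrE ?enorm_mulmx_le ?enorm_ge0 //.
  by rewrite mulr_ge0 ?opnorm_ge0 ?enorm_ge0.
have := cauchy_schwarz3 x (fun i => (N *m y) i 0); rewrite -yNy -/(sqnorm (N *m y)).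
have := sqnorm_ge0 y; have := sqnorm_ge0 (N *m y).
have : 0 <= \sum_i x i ^+ 2 by apply: sumr_ge0 => i _; rewrite sqr_ge0.
have := sqr_ge0 (opnorm N).
have [->|] := eqVneq (sqnorm y) 0; first by move=> *; rewrite mulr_ge0.
nra.
Qed.

End OperatorNorm.

Section SeparableMixture.
Variable R : realType.
Local Notation C := R[i].

Variables (m : nat) (p : 'I_m -> R) (s w : 'I_m -> 'M[C]_2).
Hypothesis s_density : forall k, density (s k).
Hypothesis w_density : forall k, density (w k).

Lemma mixture_first_marginal Psi : trace_preserving Psi ->
  ampl Psi (2^-1 *: Pplus R) = \sum_k (p k)%:C%C *: (s k *t w k) ->
  \sum_k (p k)%:C%C *: s k = 2^-1 *: 1%:M.
Proof.
move=> tp /(congr1 (@ptrace2 R 2)); rewrite ptrace2_ampl // ptrace2Z ptrace2_Pplus ptrace2_sum.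
move=> ->; apply: eq_bigr => k _.
by rewrite ptrace2Z ptrace2_tens (w_density k).2 scale1r.
Qed.

Hypothesis marginal : \sum_k (p k)%:C%C *: s k = 2^-1 *: 1%:M.

Lemma mixture_weights_sum1 : \sum_k p k = 1.
Proof.
apply: (@complexI R); rewrite rmorph_sum /=.
have := congr1 mxtrace marginal.
rewrite (big_morph _ (@mxtraceD C 2) (mxtrace0 C 2)) mxtraceZ mxtrace1 mulVf ?pnatr_eq0 //.
by under eq_bigr => k _ do rewrite mxtraceZ (s_density k).2 mulr1.
Qed.

Lemma mixture_bloch_mean0 i : \sum_k p k * bloch (s k) i 0 = 0.
Proof.
have := congr1 (fun M => complex.Re (\tr (pauli R i *m M))) marginal => /=.
rewrite Re_mxtrace_comb -scalemxAr mulmx1 mxtraceZ mxtrace_pauli mulr0 => E.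
by rewrite [RHS](_ : _ = complex.Re (0 : C)) // -E; apply: eq_bigr => k _; rewrite mxE.
Qed.

Lemma Re_mxtrace_mixture (tau : 'M[C]_(2 * 2)) : \tr tau = 1 ->
  complex.Re (\tr (tau *m \sum_k (p k)%:C%C *: (s k *t w k))) =
  (1 + \sum_k p k * (\sum_j bloch (w k) j 0 * bloch (ptrace1 tau) j 0
      + \sum_i bloch (s k) i 0 * \sum_j bloch (w k) j 0 * corr tau i j)) / 4.
Proof.
move=> tr_tau; rewrite Re_mxtrace_comb.
under eq_bigr => k _ do rewrite Re_mxtrace_tens_density //.
have A0 := sum_weighted_dot0
  (fun i => complex.Re (\tr (tau *m (pauli R i *t 1%:M)))) mixture_bloch_mean0.
rewrite -[X in (X + _) / 4]mixture_weights_sum1 -[X in X / 4]addr0.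
rewrite -[X in (_ + X) / 4]A0 -!big_split mulr_suml.
by apply: eq_bigr => k _ /=; field.
Qed.

End SeparableMixture.

Theorem proposition4 (R : realType) (tau : 'M[R[i]]_(2 * 2)) :
  density tau ->
  forall Psi : 'M[R[i]]_2 -> 'M[R[i]]_2,
    entanglement_breaking Psi ->
    \tr (tau *m choi Psi) <=
      ((1 + Num.sqrt (enorm (bloch (ptrace1 tau)) ^+ 2
                      + opnorm (corr tau) ^+ 2)) / 2)%:C%C.
Proof.
move=> [[tau_herm _] tr_tau] Psi [[lin cp tp] eb].
have [m [p [s [w [p_ge0 s_dens w_dens sep]]]]] := eb _ (density_Pplus_half R).
have marg := mixture_first_marginal w_dens tp sep.
have choi_herm : adj (choi Psi) = choi Psi by have [] := cp _ _ (psd_Pplus R).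
have choiE : choi Psi = 2%:R *: \sum_k (p k)%:C%C *: (s k *t w k).
  by rewrite -sep amplZ // scalerA mulfV ?pnatr_eq0 // scale1r.
rewrite (mxtrace_herm_real tau_herm choi_herm) lecR choiE -scalemxAr mxtraceZ.
rewrite -(rmorph_nat (real_complex R)) ReM_real (Re_mxtrace_mixture s_dens w_dens marg) //.
have := mean_bloch_bound (fun j => bloch (ptrace1 tau) j 0) p_ge0
  (mixture_weights_sum1 s_dens marg)
  (fun k => bloch_density2_le1 (s_dens k)) (fun k => bloch_density2_le1 (w_dens k))
  (mixture_bloch_mean0 marg) (opnorm_trmx_sqr (corr tau)).
rewrite enorm_sqr; lra.
Qed.
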